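(* Fix $n\ge2$, $1\le m\le n-1$ and $\sigma\ge0$. Let $u_m(\cdot;\sigma)$ be the eigenfunction for $\lambda_m(\sigma)$ normalized so that $u_m(x;\sigma)=\sin(\gamma_m(\sigma)x)$ for $x\in I_1$. Then for every $1\le k\le n-1$, $$u_m(x_k;\sigma)=\frac{\sin\left(\frac{\gamma_m(\sigma)}{n}\right)}{\sin\left(\frac{m\pi}{n}\right)}\,\sin\left(\tfrac{km\pi}{n}\right)=\frac{\sin\left(\frac{\gamma_m(\sigma)}{n}\right)}{\sin\left(\frac{m\pi}{n}\right)}\,u_m(x_k;0),$$ where $u_m(x;0)=\sin(m\pi x)$.
   Context: Fix an integer $n\ge2$. Set $x_k=k/n$ for $0\le k\le n$ and $I_k=[x_{k-1},x_k]$ for $1\le k\le n$. For $\sigma\ge 0$, the spectral flow problem is the eigenvalue problem of finding $\lambda\in\mathbb{R}$ and a nonzero continuous function $u:[0,1]\to\mathbb{R}$, smooth on each open interval $(x_{k-1},x_k)$, such that $-u''=\lambda u$ on each $(x_{k-1},x_k)$, $u(0)=u(1)=0$, and for each $1\le k\le n-1$: $u$ is continuous at $x_k$ and $u'(x_k^+)-u'(x_k^-)=\sigma\,u(x_k)$, where $\pm$ denote right/left one-sided limits. For each $\sigma\ge0$ the eigenvalues are real, positive and simple, and are listed increasingly as $\lambda_1(\sigma)<\lambda_2(\sigma)<\cdots$; at $\sigma=0$, $\lambda_m(0)=m^2\pi^2$ with eigenfunction $\sin(m\pi x)$. We write $\gamma_m(\sigma)=\sqrt{\lambda_m(\sigma)}\ge0$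 and $u_m(x;\sigma)$ for an eigenfunction associated with $\lambda_m(\sigma)$. *)

From Stdlib Require Import Reals Lra List.
From Coquelicot Require Import Coquelicot.
Open Scope R_scope.

Definition xk (n k : nat) : R := INR k / INR n.

Definition in_open_cell (n k : nat) (x : R) : Prop :=
  xk n (k - 1) < x < xk n k.

Definition is_eigenfunction (n : nat) (sigma lam : R) (u : R -> R) : Prop :=
  (forall x, 0 <= x <= 1 ->
     filterlim u (within (fun y => 0 <= y <= 1) (locally x)) (locally (u x))) /\
  (exists x, 0 <= x <= 1 /\ u x <> 0) /\
  (forall k, (1 <= k <= n)%nat -> forall x, in_open_cell n k x ->
     (forall p : nat, ex_derive_n u p x) /\
     - Derive_n u 2 x = lam * u x) /\
  u 0 = 0 /\ u 1 = 0 /\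
  (forall k, (1 <= k <= n - 1)%nat ->
     exists dplus dminus : R,
       filterlim (Derive u) (at_right (xk n k)) (locally dplus) /\
       filterlim (Derive u) (at_left (xk n k)) (locally dminus) /\
       dplus - dminus = sigma * u (xk n k)).

Definition is_eigenvalue (n : nat) (sigma lam : R) : Prop :=
  exists u, is_eigenfunction n sigma lam u.

(* lam is the m-th eigenvalue lambda_m(sigma) (eigenvalues listed increasingly,
   m >= 1): lam is an eigenvalue and exactly m-1 eigenvalues are smaller. *)
Definition is_mth_eigenvalue (n : nat) (sigma : R) (m : nat) (lam : R) : Prop :=
  is_eigenvalue n sigma lam /\
  exists l : list R, NoDup l /\ length l = (m - 1)%nat /\
    (forall mu, In mu l <-> (is_eigenvalue n sigma mu /\ mu < lam)).

(** Write [g = sqrt lam] and [h = 1/n].  On each cell an eigenfunction is a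
    combination of the fundamental solutions [Cfun lam], [Sfun lam] of
    [y'' = - lam y] (uniqueness by an energy estimate).  Continuity and the jump
    condition at [x_k] give the three-term recurrence
      [u(x_(k+1)) + u(x_(k-1)) = 2 T u(x_k)],  [T = Cfun lam h + sigma Sfun lam h / 2],
    so with [u(x_0) = 0] the node values are [u(x_1) U_(k-1)(T)] (Chebyshev
    polynomials of the second kind).  Since [u(x_1) <> 0] and [u(x_n) = 0],
    [U_(n-1)(T) = 0]: every eigenvalue is positive and either [g >= n pi] or
    [disp g = cos (i pi / n)] for some [1 <= i <= n - 1], where [disp] is the
    dispersion function, strictly decreasing on [(0, n pi]].  Conversely each such
    relation has a root, realised by an explicitly glued eigenfunction.  Counting
    eigenvalues then shows that [lambda_m] ([m <= n - 1]) satisfies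
    [disp g = cos (m pi / n)], and the theorem follows from
    [U_(k-1)(cos t) sin t = sin (k t)] and the normalisation [u(x_1) = sin (g / n)]. *)

From Stdlib Require Import Reals Lra Lia ZArith List ClassicalEpsilon.
From Coquelicot Require Import Coquelicot.
Open Scope R_scope.

(** Fundamental solutions of [y'' = - lam y]: [Cfun lam] and [Sfun lam] are the
    solutions with initial data (1, 0) and (0, 1) at 0, for every sign of [lam]. *)
Definition Cfun (lam x : R) : R :=
  if Rlt_dec 0 lam then cos (sqrt lam * x)
  else if Rlt_dec lam 0 then (exp (sqrt (-lam) * x) + exp (- (sqrt (-lam) * x))) / 2
  else 1.

Definition Sfun (lam x : R) : R :=
  if Rlt_dec 0 lam then sin (sqrt lam * x) / sqrt lam
  else if Rlt_dec lam 0 then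
    (exp (sqrt (-lam) * x) - exp (- (sqrt (-lam) * x))) / (2 * sqrt (-lam))
  else x.

Lemma Cfun_derive lam x : is_derive (Cfun lam) x (- lam * Sfun lam x).
Proof.
  unfold Cfun, Sfun; destruct (Rlt_dec 0 lam) as [Hp|Hp].
  - assert (Hq : 0 < sqrt lam) by (apply sqrt_lt_R0; lra).
    auto_derive; auto. set (q := sqrt lam) in *.
    assert (Hl : lam = q * q) by (unfold q; rewrite sqrt_sqrt; lra).
    rewrite Hl. field. lra.
  - destruct (Rlt_dec lam 0) as [Hn|Hn].
    + assert (Hq : 0 < sqrt (-lam)) by (apply sqrt_lt_R0; lra).
      auto_derive; auto. set (q := sqrt (-lam)) in *.
      assert (Hl : lam = - (q * q)) by (unfold q; rewrite sqrt_sqrt; lra).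
      rewrite Hl. field. lra.
    + replace lam with 0 by lra. auto_derive; auto. ring.
Qed.

Lemma Sfun_derive lam x : is_derive (Sfun lam) x (Cfun lam x).
Proof.
  unfold Cfun, Sfun; destruct (Rlt_dec 0 lam) as [Hp|Hp].
  - assert (0 < sqrt lam) by (apply sqrt_lt_R0; lra).
    auto_derive; auto. field. lra.
  - destruct (Rlt_dec lam 0) as [Hn|Hn].
    + assert (0 < sqrt (-lam)) by (apply sqrt_lt_R0; lra).
      auto_derive; auto. field. lra.
    + auto_derive; auto.
Qed.

Lemma fundamental_wronskian lam x : Cfun lam x ^ 2 + lam * Sfun lam x ^ 2 = 1.
Proof.
  unfold Cfun, Sfun; destruct (Rlt_dec 0 lam) as [Hp|Hp].
  - set (q := sqrt lam).
    assert (Hq : 0 < q) by (apply sqrt_lt_R0; lra).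
    assert (Hl : lam = q * q) by (unfold q; rewrite sqrt_sqrt; lra).
    pose proof (sin2_cos2 (q * x)) as Hpyth. unfold Rsqr in Hpyth.
    rewrite Hl. field_simplify; [|lra]. nra.
  - destruct (Rlt_dec lam 0) as [Hn|Hn].
    + set (q := sqrt (-lam)). set (a := q * x).
      assert (Hq : 0 < q) by (apply sqrt_lt_R0; lra).
      assert (Hl : lam = - (q * q)) by (unfold q; rewrite sqrt_sqrt; lra).
      assert (He : exp a * exp (- a) = 1)
        by (rewrite <- exp_plus, Rplus_opp_r; apply exp_0).
      rewrite Hl. field_simplify; [|lra].
      replace (16 * exp a * exp (- a) * q ^ 2) with (16 * q ^ 2 * (exp a * exp (- a)))
        by ring.
      rewrite He. field. lra.
    + replace lam with 0 by lra. ring.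
Qed.

Lemma Cfun_0 lam : Cfun lam 0 = 1.
Proof.
  unfold Cfun; destruct (Rlt_dec 0 lam); [|destruct (Rlt_dec lam 0)];
    rewrite ?Rmult_0_r, ?Ropp_0, ?cos_0, ?exp_0; lra.
Qed.

Lemma Sfun_0 lam : Sfun lam 0 = 0.
Proof.
  unfold Sfun; destruct (Rlt_dec 0 lam); [|destruct (Rlt_dec lam 0)];
    rewrite ?Rmult_0_r, ?Ropp_0, ?sin_0, ?exp_0; try reflexivity; unfold Rdiv; ring.
Qed.

Lemma fundamental_nonpos lam x : lam <= 0 -> 0 < x -> 1 <= Cfun lam x /\ 0 < Sfun lam x.
Proof.
  intros Hl Hx. unfold Cfun, Sfun; destruct (Rlt_dec 0 lam) as [Hp|_]; [lra|].
  destruct (Rlt_dec lam 0) as [Hn|Hn]; [|lra].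
  assert (Hq : 0 < sqrt (-lam)) by (apply sqrt_lt_R0; lra).
  set (a := sqrt (-lam) * x).
  assert (Ha : 0 < a) by (unfold a; nra).
  assert (Hmono : exp (- a) < exp a) by (apply exp_increasing; lra).
  assert (Hprod : exp (a / 2) * exp (- (a / 2)) = 1)
    by (rewrite <- exp_plus, Rplus_opp_r; apply exp_0).
  assert (E1 : exp a = exp (a / 2) * exp (a / 2)) by (rewrite <- exp_plus; f_equal; field).
  assert (E2 : exp (- a) = exp (- (a / 2)) * exp (- (a / 2)))
    by (rewrite <- exp_plus; f_equal; field).
  split.
  - rewrite E1, E2. pose proof (pow2_ge_0 (exp (a / 2) - exp (- (a / 2)))). nra.
  - apply Rdiv_lt_0_compat; lra.
Qed.

Lemma energy_cross_bound (p u v : R) :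
  2 * u * v * p <= (Rabs p + 1) * (u ^ 2 + v ^ 2) /\
  - (2 * u * v * p) <= (Rabs p + 1) * (u ^ 2 + v ^ 2).
Proof.
  pose proof (pow2_ge_0 (u - v)). pose proof (pow2_ge_0 (u + v)).
  destruct (Rle_dec 0 p).
  - rewrite Rabs_pos_eq by lra. split; nra.
  - rewrite Rabs_left by lra. split; nra.
Qed.

(** Gronwall-type vanishing: a function with [E(c) = 0] and [E' <= K E] to the right
    of [c] (resp. [E' >= - K E] to the left) is [<= 0] there, since [E exp(-K y)]
    (resp. [E exp(K y)]) is nonincreasing (resp. nondecreasing). *)
Lemma gronwall_zero_right (E dE : R -> R) K c x : c < x ->
  (forall y, c <= y <= x -> is_derive E y (dE y)) ->
  (forall y, c <= y <= x -> dE y <= K * E y) -> E c = 0 -> E x <= 0.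
Proof.
  intros Hcx HD Hbound HEc.
  assert (HF : forall y, c <= y <= x -> derivable_pt_lim (fun y => E y * exp (- K * y)) y
                 (dE y * exp (- K * y) + E y * (- K * exp (- K * y)))).
  { intros y Hy. apply is_derive_Reals.
    apply (is_derive_mult E (fun y => exp (- K * y))); [apply HD, Hy | |].
    - auto_derive; auto. ring.
    - intros; apply Rmult_comm. }
  destruct (MVT_cor2 _ _ c x Hcx HF) as [z [Hz1 Hz2]].
  rewrite HEc in Hz1. specialize (Hbound z ltac:(lra)).
  pose proof (exp_pos (- K * z)). pose proof (exp_pos (- K * x)).
  assert (dE z * exp (- K * z) + E z * (- K * exp (- K * z)) <= 0) by nra.
  nra.
Qed.

Lemma gronwall_zero_left (E dE : R -> R) K c x : x < c ->
  (forall y, x <= y <= c -> is_derive E y (dE y)) ->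
  (forall y, x <= y <= c -> - (K * E y) <= dE y) -> E c = 0 -> E x <= 0.
Proof.
  intros Hxc HD Hbound HEc.
  assert (HF : forall y, x <= y <= c -> derivable_pt_lim (fun y => E y * exp (K * y)) y
                 (dE y * exp (K * y) + E y * (K * exp (K * y)))).
  { intros y Hy. apply is_derive_Reals.
    apply (is_derive_mult E (fun y => exp (K * y))); [apply HD, Hy | |].
    - auto_derive; auto. ring.
    - intros; apply Rmult_comm. }
  destruct (MVT_cor2 _ _ x c Hxc HF) as [z [Hz1 Hz2]].
  rewrite HEc in Hz1. specialize (Hbound z ltac:(lra)).
  pose proof (exp_pos (K * z)). pose proof (exp_pos (K * x)).
  assert (0 <= dE z * exp (K * z) + E z * (K * exp (K * z))) by nra.
  nra.
Qed.

(** Uniqueness for [g'' = - lam g] on an open interval: a solution with zero Cauchy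
    data at one point vanishes, because the energy [E = g^2 + g'^2] satisfies
    [|E'| <= K E] with [K = |1 - lam| + 1]. *)
Lemma ode_uniqueness (a b lam c : R) (g g1 : R -> R) :
  a < c < b ->
  (forall x, a < x < b -> is_derive g x (g1 x) /\ is_derive g1 x (- lam * g x)) ->
  g c = 0 -> g1 c = 0 -> forall x, a < x < b -> g x = 0.
Proof.
  intros Hc Hd H0 H1 x Hx.
  set (K := Rabs (1 - lam) + 1).
  set (E := fun y => g y ^ 2 + g1 y ^ 2).
  set (dE := fun y => 2 * g y * g1 y * (1 - lam)).
  assert (HE : forall y, a < y < b -> is_derive E y (dE y)).
  { intros y Hy. destruct (Hd y Hy) as [D1 D2]. unfold E, dE.
    pose proof (is_derive_plus _ _ _ _ _ (is_derive_pow g 2 y _ D1)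
                  (is_derive_pow g1 2 y _ D2)) as X.
    simpl in X. unfold plus in X; simpl in X.
    replace (2 * g y * g1 y * (1 - lam)) with
      ((1 + 1) * g1 y * (g y * 1) + (1 + 1) * (- lam * g y) * (g1 y * 1)) by ring.
    exact X. }
  assert (EC : E c = 0) by (unfold E; rewrite H0, H1; ring).
  pose proof (fun y => energy_cross_bound (1 - lam) (g y) (g1 y)) as Hb.
  assert (Ex_le : E x <= 0).
  { destruct (Rtotal_order c x) as [Hlt|[Heq|Hgt]].
    - apply (gronwall_zero_right E dE K c x Hlt); [intros; apply HE; lra | | exact EC].
      intros y _. apply (Hb y).
    - subst. lra.
    - apply (gronwall_zero_left E dE K c x Hgt); [intros; apply HE; lra | | exact EC].
      intros y _. pose proof (proj2 (Hb y)). unfold dE, E, K. lra. }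
  unfold E in Ex_le. pose proof (pow2_ge_0 (g x)). pose proof (pow2_ge_0 (g1 x)). nra.
Qed.

Lemma is_derive_shift (f : R -> R) a x l :
  is_derive f (x - a) l -> is_derive (fun y => f (y - a)) x l.
Proof.
  intros Hf.
  assert (D : is_derive (fun y : R => y - a) x 1) by (auto_derive; auto; ring).
  pose proof (is_derive_comp f (fun y => y - a) x _ 1 Hf D) as X.
  unfold scal in X; simpl in X; unfold mult in X; simpl in X.
  rewrite Rmult_1_l in X. exact X.
Qed.

Definition gen_sol (lam A B a x : R) : R := A * Cfun lam (x - a) + B * Sfun lam (x - a).
Definition gen_sol' (lam A B a x : R) : R := - lam * A * Sfun lam (x - a) + B * Cfun lam (x - a).

Lemma gen_sol_derive lam A B a x : is_derive (gen_sol lam A B a) x (gen_sol' lam A B a x).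
Proof.
  unfold gen_sol, gen_sol'.
  replace (- lam * A * Sfun lam (x - a) + B * Cfun lam (x - a)) with
    (A * (- lam * Sfun lam (x - a)) + B * Cfun lam (x - a)) by ring.
  apply (is_derive_plus (fun y => A * Cfun lam (y - a)) (fun y => B * Sfun lam (y - a)));
    apply is_derive_scal, is_derive_shift; [apply Cfun_derive | apply Sfun_derive].
Qed.

Lemma gen_sol'_derive lam A B a x :
  is_derive (gen_sol' lam A B a) x (- lam * gen_sol lam A B a x).
Proof.
  unfold gen_sol, gen_sol'.
  replace (- lam * (A * Cfun lam (x - a) + B * Sfun lam (x - a))) with
    ((- lam * A) * Cfun lam (x - a) + B * (- lam * Sfun lam (x - a))) by ring.
  apply (is_derive_plus (fun y => - lam * A * Sfun lam (y - a)) (fun y => B * Cfun lam (y - a)));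
    apply is_derive_scal, is_derive_shift; [apply Sfun_derive | apply Cfun_derive].
Qed.

Lemma gen_sol_continuous lam A B a x : continuous (gen_sol lam A B a) x.
Proof.
  apply (@ex_derive_continuous R_AbsRing R_NormedModule). eexists. apply gen_sol_derive.
Qed.

Lemma gen_sol'_continuous lam A B a x : continuous (gen_sol' lam A B a) x.
Proof.
  apply (@ex_derive_continuous R_AbsRing R_NormedModule). eexists. apply gen_sol'_derive.
Qed.

Lemma gen_sol_at_base lam A B a : gen_sol lam A B a a = A /\ gen_sol' lam A B a a = B.
Proof. unfold gen_sol, gen_sol'. rewrite Rminus_diag, Cfun_0, Sfun_0. split; ring. Qed.

(** A [C^2] solution of [y'' = - lam y] on an open interval is a general solution
    there; the coefficients are obtained by propagating its Cauchy data at an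
    interior point [c] back to the left endpoint [a]. *)
Lemma ode_solution_is_gen_sol (a b c lam : R) (y : R -> R) :
  a < c < b ->
  (forall x, a < x < b -> is_derive y x (Derive y x) /\
                          is_derive (Derive y) x (- lam * y x)) ->
  let A := y c * Cfun lam (c - a) - Derive y c * Sfun lam (c - a) in
  let B := lam * y c * Sfun lam (c - a) + Derive y c * Cfun lam (c - a) in
  forall x, a < x < b -> y x = gen_sol lam A B a x /\ Derive y x = gen_sol' lam A B a x.
Proof.
  intros Hc Hy A B.
  pose proof (fundamental_wronskian lam (c - a)) as Hw.
  set (g := fun x => y x - gen_sol lam A B a x).
  set (g1 := fun x => Derive y x - gen_sol' lam A B a x).
  assert (Hg : forall x, a < x < b -> is_derive g x (g1 x)).
  { intros x Hx. apply (is_derive_minus y _ x); [apply Hy, Hx | apply gen_sol_derive]. }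
  assert (G0 : forall x, a < x < b -> g x = 0).
  { apply (ode_uniqueness a b lam c g g1 Hc).
    - intros x Hx. split; [apply Hg, Hx|].
      unfold g1, g.
      replace (- lam * (y x - gen_sol lam A B a x)) with
        (- lam * y x - (- lam * gen_sol lam A B a x)) by ring.
      apply (is_derive_minus (Derive y) _ x); [apply Hy, Hx | apply gen_sol'_derive].
    - unfold g, gen_sol, A, B.
      transitivity (y c * (1 - (Cfun lam (c - a) ^ 2 + lam * Sfun lam (c - a) ^ 2)));
        [ring | rewrite Hw; ring].
    - unfold g1, gen_sol', A, B.
      transitivity (Derive y c * (1 - (Cfun lam (c - a) ^ 2 + lam * Sfun lam (c - a) ^ 2)));
        [ring | rewrite Hw; ring]. }
  assert (G1 : forall x, a < x < b -> g1 x = 0).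
  { intros x Hx.
    assert (HD0 : is_derive g x 0).
    { apply (is_derive_ext_loc (fun _ => 0)); [|auto_derive; auto].
      apply (locally_open (fun z => a < z < b)); [apply open_and; [apply open_gt | apply open_lt]| |exact Hx].
      intros z Hz. symmetry. apply G0, Hz. }
    rewrite <- (is_derive_unique _ _ _ (Hg x Hx)). apply (is_derive_unique _ _ _ HD0). }
  intros x Hx. pose proof (G0 x Hx). pose proof (G1 x Hx). unfold g, g1 in *. split; lra.
Qed.

Lemma filterlim_at_right_of_eq (D f : R -> R) a b :
  a < b -> (forall y, a < y < b -> D y = f y) -> continuous f a ->
  filterlim D (at_right a) (locally (f a)).
Proof.
  intros Hab HD Hf.
  apply (filterlim_ext_loc f D).
  - exists (mkposreal (b - a) ltac:(lra)). intros y Hy Hay. simpl in Hy.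
    change (Rabs (y - a) < b - a) in Hy. rewrite Rabs_pos_eq in Hy by lra.
    symmetry; apply HD; lra.
  - eapply filterlim_filter_le_1; [apply filter_le_within | exact Hf].
Qed.

Lemma filterlim_at_left_of_eq (D f : R -> R) a b :
  a < b -> (forall y, a < y < b -> D y = f y) -> continuous f b ->
  filterlim D (at_left b) (locally (f b)).
Proof.
  intros Hab HD Hf.
  apply (filterlim_ext_loc f D).
  - exists (mkposreal (b - a) ltac:(lra)). intros y Hy Hay. simpl in Hy.
    change (Rabs (y - b) < b - a) in Hy. rewrite Rabs_left in Hy by lra.
    symmetry; apply HD; lra.
  - eapply filterlim_filter_le_1; [apply filter_le_within | exact Hf].
Qed.

Lemma at_right_limit_unique (f : R -> R) a l1 l2 :
  filterlim f (at_right a) (locally l1) -> filterlim f (at_right a) (locally l2) -> l1 = l2.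
Proof.
  apply (@filterlim_locally_unique R R_AbsRing R_NormedModule).
  apply Proper_StrongProper, at_right_proper_filter.
Qed.

Lemma at_left_limit_unique (f : R -> R) a l1 l2 :
  filterlim f (at_left a) (locally l1) -> filterlim f (at_left a) (locally l2) -> l1 = l2.
Proof.
  apply (@filterlim_locally_unique R R_AbsRing R_NormedModule).
  apply Proper_StrongProper, at_left_proper_filter.
Qed.

Lemma at_right_within_unit a : 0 <= a < 1 ->
  filter_le (at_right a) (within (fun y => 0 <= y <= 1) (locally a)).
Proof.
  intros Ha P [d Hd].
  assert (Hm : 0 < Rmin d (1 - a)) by (apply Rmin_pos; [apply cond_pos | lra]).
  exists (mkposreal _ Hm). intros y Hy Hay. simpl in Hy.
  change (Rabs (y - a) < Rmin d (1 - a)) in Hy. rewrite Rabs_pos_eq in Hy by lra.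
  pose proof (Rmin_l d (1 - a)). pose proof (Rmin_r d (1 - a)).
  apply Hd; [|lra]. change (Rabs (y - a) < d). rewrite Rabs_pos_eq; lra.
Qed.

Lemma at_left_within_unit b : 0 < b <= 1 ->
  filter_le (at_left b) (within (fun y => 0 <= y <= 1) (locally b)).
Proof.
  intros Hb P [d Hd].
  assert (Hm : 0 < Rmin d b) by (apply Rmin_pos; [apply cond_pos | lra]).
  exists (mkposreal _ Hm). intros y Hy Hyb. simpl in Hy.
  change (Rabs (y - b) < Rmin d b) in Hy. rewrite Rabs_left in Hy by lra.
  pose proof (Rmin_l d b). pose proof (Rmin_r d b).
  apply Hd; [|lra]. change (Rabs (y - b) < d). rewrite Rabs_left; lra.
Qed.

Lemma xk_0 n : xk n 0 = 0.
Proof. unfold xk. simpl. unfold Rdiv. ring. Qed.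

Lemma xk_n n : (1 <= n)%nat -> xk n n = 1.
Proof. intros. unfold xk. assert (0 < INR n) by (apply lt_0_INR; lia). field. lra. Qed.

Lemma xk_step n k : (1 <= n)%nat -> (1 <= k)%nat -> xk n k - xk n (k - 1) = / INR n.
Proof.
  intros Hn Hk. unfold xk. rewrite minus_INR by lia. simpl.
  assert (0 < INR n) by (apply lt_0_INR; lia). field. lra.
Qed.

Lemma xk_lt n k : (1 <= n)%nat -> (1 <= k)%nat -> xk n (k - 1) < xk n k.
Proof.
  intros Hn Hk. pose proof (xk_step n k Hn Hk).
  assert (0 < / INR n) by (apply Rinv_0_lt_compat, lt_0_INR; lia). lra.
Qed.

Lemma xk_bounds n k : (1 <= n)%nat -> (k <= n)%nat -> 0 <= xk n k <= 1.
Proof.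
  intros Hn Hk. unfold xk. assert (0 < INR n) by (apply lt_0_INR; lia).
  pose proof (pos_INR k). assert (INR k <= INR n) by (apply le_INR; lia).
  split; [apply Rdiv_le_0_compat; lra|].
  apply (Rmult_le_reg_r (INR n)); auto. unfold Rdiv. rewrite Rmult_assoc, Rinv_l; lra.
Qed.

Lemma grid_cover n x : (1 <= n)%nat -> 0 <= x <= 1 ->
  (exists k, (k <= n)%nat /\ x = xk n k) \/
  (exists k, (1 <= k <= n)%nat /\ in_open_cell n k x).
Proof.
  intros Hn Hx.
  assert (G : forall K, (K <= n)%nat -> forall y, 0 <= y <= xk n K ->
    (exists k, (k <= n)%nat /\ y = xk n k) \/
    (exists k, (1 <= k <= n)%nat /\ in_open_cell n k y)).
  { induction K as [|K IH]; intros HK y Hy.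
    - left. exists 0%nat. rewrite xk_0 in *. split; [lia | lra].
    - destruct (Rle_lt_dec y (xk n K)) as [H1|H1]; [apply IH; [lia | lra]|].
      destruct (Req_dec y (xk n (S K))) as [H2|H2]; [left; exists (S K); auto|].
      right. exists (S K). split; [lia|]. unfold in_open_cell.
      replace (S K - 1)%nat with K by lia. lra. }
  apply (G n); [lia | rewrite xk_n by lia; lra].
Qed.

Section EigenfunctionNodes.
Variables (n : nat) (sigma lam : R) (u : R -> R).
Hypothesis Hn : (2 <= n)%nat.
Hypothesis Hu : is_eigenfunction n sigma lam u.

Let c := Cfun lam (/ INR n).
Let s := Sfun lam (/ INR n).

Definition cell_rep (k : nat) (B : R) : Prop :=
  forall x, in_open_cell n k x ->
    u x = gen_sol lam (u (xk n (k - 1))) B (xk n (k - 1)) x /\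
    Derive u x = gen_sol' lam (u (xk n (k - 1))) B (xk n (k - 1)) x.

Lemma cell_representation k : (1 <= k <= n)%nat -> exists B, cell_rep k B.
Proof.
  intros Hk. destruct Hu as [Hcont [_ [Hode _]]].
  set (a := xk n (k - 1)). set (b := xk n k).
  assert (Hab : a < b) by (apply xk_lt; lia).
  assert (Ha : 0 <= a) by (apply xk_bounds; lia).
  assert (Hb : b <= 1) by (apply xk_bounds; lia).
  assert (Hmid : a < (a + b) / 2 < b) by lra.
  assert (Hsol : forall x, a < x < b ->
    is_derive u x (Derive u x) /\ is_derive (Derive u) x (- lam * u x)).
  { intros x Hx. destruct (Hode k Hk x Hx) as [Hsmooth Heq].
    change (Derive_n u 2 x) with (Derive (Derive u) x) in Heq.
    split; [apply Derive_correct, (Hsmooth 1%nat)|].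
    replace (- lam * u x) with (Derive (Derive u) x) by lra.
    apply Derive_correct, (Hsmooth 2%nat). }
  pose proof (ode_solution_is_gen_sol a b _ lam u Hmid Hsol) as Hrep. cbv zeta in Hrep.
  set (A0 := u ((a + b) / 2) * _ - _) in Hrep.
  set (B0 := lam * _ * _ + _) in Hrep.
  assert (HA : u a = A0).
  { destruct (gen_sol_at_base lam A0 B0 a) as [E _].
    apply (at_right_limit_unique u a).
    - eapply filterlim_filter_le_1; [apply at_right_within_unit; lra | apply Hcont; lra].
    - rewrite <- E.
      apply (filterlim_at_right_of_eq u _ a b Hab); [intros; apply Hrep; auto|].
      apply gen_sol_continuous. }
  exists B0. intros x Hx. fold a in Hx |- *. rewrite HA. apply Hrep, Hx.
Qed.

Lemma cell_right_value k B : (1 <= k <= n)%nat -> cell_rep k B ->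
  u (xk n k) = u (xk n (k - 1)) * c + B * s.
Proof.
  intros Hk Hrep. destruct Hu as [Hcont _].
  assert (Hab : xk n (k - 1) < xk n k) by (apply xk_lt; lia).
  assert (Ha : 0 <= xk n (k - 1)) by (apply xk_bounds; lia).
  assert (Hb : xk n k <= 1) by (apply xk_bounds; lia).
  apply (at_left_limit_unique u (xk n k)).
  - eapply filterlim_filter_le_1; [apply at_left_within_unit; lra | apply Hcont; lra].
  - replace (u (xk n (k - 1)) * c + B * s)
      with (gen_sol lam (u (xk n (k - 1))) B (xk n (k - 1)) (xk n k))
      by (unfold gen_sol; rewrite xk_step by lia; reflexivity).
    apply (filterlim_at_left_of_eq u _ _ _ Hab); [intros; apply Hrep; auto|].
    apply gen_sol_continuous.
Qed.

Lemma node_jump k B B' : (1 <= k <= n - 1)%nat -> cell_rep k B -> cell_rep (S k) B' ->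
  B' - (- lam * u (xk n (k - 1)) * s + B * c) = sigma * u (xk n k).
Proof.
  intros Hk Hrep Hrep'. destruct Hu as [_ [_ [_ [_ [_ Hjump]]]]].
  destruct (Hjump k Hk) as [dp [dm [Hp [Hm Hd]]]].
  rewrite <- Hd. f_equal.
  - assert (Hab : xk n k < xk n (S k))
      by (pose proof (xk_lt n (S k) ltac:(lia) ltac:(lia)) as L;
          replace (S k - 1)%nat with k in L by lia; exact L).
    apply (at_right_limit_unique (Derive u) (xk n k)); [|exact Hp].
    destruct (gen_sol_at_base lam (u (xk n k)) B' (xk n k)) as [_ E].
    rewrite <- E.
    apply (filterlim_at_right_of_eq _ _ _ _ Hab); [|apply gen_sol'_continuous].
    intros y Hy. assert (Hy' : in_open_cell n (S k) y)
      by (unfold in_open_cell; replace (S k - 1)%nat with k by lia; exact Hy).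
    pose proof (proj2 (Hrep' y Hy')) as E'. replace (S k - 1)%nat with k in E' by lia.
    exact E'.
  - assert (Hab : xk n (k - 1) < xk n k) by (apply xk_lt; lia).
    apply (at_left_limit_unique (Derive u) (xk n k)); [|exact Hm].
    replace (- lam * u (xk n (k - 1)) * s + B * c)
      with (gen_sol' lam (u (xk n (k - 1))) B (xk n (k - 1)) (xk n k))
      by (unfold gen_sol'; rewrite xk_step by lia; reflexivity).
    apply (filterlim_at_left_of_eq _ _ _ _ Hab); [intros; apply Hrep; auto|].
    apply gen_sol'_continuous.
Qed.

Lemma node_recurrence k : (1 <= k <= n - 1)%nat ->
  u (xk n (S k)) + u (xk n (k - 1)) = (2 * c + sigma * s) * u (xk n k).
Proof.
  intros Hk.
  destruct (cell_representation k ltac:(lia)) as [B HB].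
  destruct (cell_representation (S k) ltac:(lia)) as [B' HB'].
  pose proof (cell_right_value k B ltac:(lia) HB) as Ek.
  pose proof (cell_right_value (S k) B' ltac:(lia) HB') as Ek1.
  pose proof (node_jump k B B' Hk HB HB') as J.
  replace (S k - 1)%nat with k in Ek1 by lia.
  pose proof (fundamental_wronskian lam (/ INR n)) as W. fold c s in W.
  rewrite Ek1. replace B' with (sigma * u (xk n k) + (- lam * u (xk n (k - 1)) * s + B * c))
    by lra.
  rewrite Ek.
  transitivity (u (xk n (k - 1)) * (1 - (c ^ 2 + lam * s ^ 2)) +
                (2 * c + sigma * s) * (u (xk n (k - 1)) * c + B * s)); [ring|].
  rewrite W. ring.
Qed.

(** The slope [B] of a cell is the right limit of [u'] at its left node. *)
Lemma cell_rep_unique k B B' : (1 <= k)%nat -> cell_rep k B -> cell_rep k B' -> B = B'.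
Proof.
  intros Hk Hrep Hrep'.
  assert (Hab : xk n (k - 1) < xk n k) by (apply xk_lt; lia).
  destruct (gen_sol_at_base lam (u (xk n (k - 1))) B (xk n (k - 1))) as [_ E].
  destruct (gen_sol_at_base lam (u (xk n (k - 1))) B' (xk n (k - 1))) as [_ E'].
  apply (at_right_limit_unique (Derive u) (xk n (k - 1))).
  - rewrite <- E. apply (filterlim_at_right_of_eq _ _ _ _ Hab); [|apply gen_sol'_continuous].
    intros; apply Hrep; auto.
  - rewrite <- E'. apply (filterlim_at_right_of_eq _ _ _ _ Hab); [|apply gen_sol'_continuous].
    intros; apply Hrep'; auto.
Qed.

(** If the slope in the first cell vanished, the recurrence would propagate zero
    Cauchy data through all cells and force [u = 0]; hence [u(x_1) = B s], [B <> 0]. *)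
Lemma first_cell_slope : exists B, B <> 0 /\ u (xk n 1) = B * s.
Proof.
  destruct (cell_representation 1 ltac:(lia)) as [B HB].
  assert (Hu0 : u (xk n 0) = 0) by (rewrite xk_0; apply Hu).
  exists B. split.
  - intro HB0. subst B.
    assert (Zero : forall k, (1 <= k <= n)%nat ->
              u (xk n (k - 1)) = 0 /\ forall B', cell_rep k B' -> B' = 0).
    { induction k as [|k IH]; intros Hk; [lia|].
      destruct (Nat.eq_dec k 0) as [->|Hk0].
      - split; [exact Hu0|]. intros B' HB'. symmetry. exact (cell_rep_unique 1 0 B' (le_n 1) HB HB').
      - destruct (IH ltac:(lia)) as [Hval Hslope].
        destruct (cell_representation k ltac:(lia)) as [Bk HBk].
        rewrite (Hslope Bk HBk) in HBk.
        assert (Hk' : u (xk n k) = 0)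
          by (rewrite (cell_right_value k 0 ltac:(lia) HBk), Hval; ring).
        replace (S k - 1)%nat with k by lia. split; [exact Hk'|].
        intros B' HB'. pose proof (node_jump k 0 B' ltac:(lia) HBk HB') as J.
        rewrite Hval, Hk' in J. lra. }
    destruct Hu as [_ [[x [Hx Hux]] _]]. apply Hux.
    destruct (grid_cover n x ltac:(lia) Hx) as [[k [Hk ->]]|[k [Hk Hcell]]].
    + destruct (Nat.eq_dec k n) as [->|Hkn]; [rewrite xk_n by lia; apply Hu|].
      pose proof (proj1 (Zero (S k) ltac:(lia))) as E.
      replace (S k - 1)%nat with k in E by lia. exact E.
    + destruct (cell_representation k Hk) as [Bk HBk].
      destruct (Zero k Hk) as [Hval Hslope]. rewrite (Hslope Bk HBk) in HBk.
      rewrite (proj1 (HBk x Hcell)), Hval. unfold gen_sol. ring.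
  - rewrite (cell_right_value 1 B ltac:(lia) HB). simpl. rewrite Hu0. ring.
Qed.

End EigenfunctionNodes.

(** Chebyshev polynomials of the second kind, shifted: [cheb_U T k = U_(k-1)(T)]. *)
Fixpoint cheb_U (T : R) (k : nat) : R :=
  match k with
  | O => 0
  | S O => 1
  | S ((S j) as k') => 2 * T * cheb_U T k' - cheb_U T j
  end.

Lemma cheb_U_rec T k : cheb_U T (S (S k)) = 2 * T * cheb_U T (S k) - cheb_U T k.
Proof. reflexivity. Qed.

Lemma recurrence_cheb_U (v : nat -> R) T n : v 0%nat = 0 ->
  (forall k, (1 <= k <= n - 1)%nat -> v (S k) + v (k - 1)%nat = 2 * T * v k) ->
  forall k, (k <= n)%nat -> v k = v 1%nat * cheb_U T k.
Proof.
  intros H0 Hrec.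
  assert (G : forall k, (S k <= n)%nat ->
            v k = v 1%nat * cheb_U T k /\ v (S k) = v 1%nat * cheb_U T (S k)).
  { induction k as [|k IH]; intros Hk.
    - simpl. rewrite H0. split; ring.
    - destruct (IH ltac:(lia)) as [I1 I2]. split; [exact I2|].
      pose proof (Hrec (S k) ltac:(lia)) as E. replace (S k - 1)%nat with k in E by lia.
      rewrite cheb_U_rec. replace (v (S (S k))) with (2 * T * v (S k) - v k) by lra.
      rewrite I1, I2. ring. }
  intros [|k] Hk; [simpl; rewrite H0; ring | apply (G k Hk)].
Qed.

Lemma cheb_U_ge1 T : 1 <= T -> forall k, 1 <= cheb_U T (S k).
Proof.
  intros HT.
  assert (G : forall k, cheb_U T (S k) - cheb_U T k >= 1 /\ cheb_U T k >= 0).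
  { induction k as [|k [I1 I2]]; [simpl; lra|]. rewrite cheb_U_rec. split; nra. }
  intros k. destruct (G k). lra.
Qed.

Lemma cheb_U_opp T k : cheb_U (- T) k = (-1) ^ (S k) * cheb_U T k.
Proof.
  revert k.
  assert (G : forall k, cheb_U (- T) k = (-1) ^ (S k) * cheb_U T k /\
                        cheb_U (- T) (S k) = (-1) ^ (S (S k)) * cheb_U T (S k)).
  { induction k as [|k [I1 I2]]; [simpl; split; ring|].
    split; [exact I2|]. rewrite !cheb_U_rec, I1, I2. simpl. ring. }
  intro k; apply (G k).
Qed.

Lemma cheb_U_cos t k : cheb_U (cos t) k * sin t = sin (INR k * t).
Proof.
  revert k.
  assert (G : forall k, cheb_U (cos t) k * sin t = sin (INR k * t) /\
                        cheb_U (cos t) (S k) * sin t = sin (INR (S k) * t)).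
  { induction k as [|k [I1 I2]].
    - simpl. rewrite !Rmult_0_l, !Rmult_1_l, sin_0. split; ring.
    - split; [exact I2|]. rewrite cheb_U_rec.
      transitivity (2 * cos t * (cheb_U (cos t) (S k) * sin t) - cheb_U (cos t) k * sin t);
        [ring|].
      rewrite I1, I2.
      replace (INR (S (S k)) * t) with (INR (S k) * t + t) by (rewrite !S_INR; ring).
      replace (INR k * t) with (INR (S k) * t - t) by (rewrite !S_INR; ring).
      rewrite sin_plus, sin_minus. ring. }
  intro k; apply (G k).
Qed.

Lemma cheb_U_root T n : (1 <= n)%nat -> cheb_U T n = 0 ->
  exists i, (1 <= i <= n - 1)%nat /\ T = cos (INR i * PI / INR n).
Proof.
  intros Hn HU.
  destruct n as [|n']; [lia|].
  destruct (Rle_dec 1 T) as [H1|H1]; [pose proof (cheb_U_ge1 T H1 n'); lra|].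
  destruct (Rle_dec T (-1)) as [H2|H2].
  { pose proof (cheb_U_ge1 (- T) ltac:(lra) n') as G. rewrite cheb_U_opp, HU in G. lra. }
  set (n := S n') in *.
  set (t := acos T).
  assert (Hc : cos t = T) by (apply cos_acos; lra).
  pose proof (acos_bound T) as Hb. fold t in Hb.
  assert (Ht0 : t <> 0) by (intro E; rewrite E, cos_0 in Hc; lra).
  assert (HtPI : t <> PI) by (intro E; rewrite E, cos_PI in Hc; lra).
  assert (Hs : 0 < sin t) by (apply sin_gt_0; lra).
  pose proof (cheb_U_cos t n) as Hsin. rewrite Hc, HU, Rmult_0_l in Hsin.
  destruct (sin_eq_0_0 _ (eq_sym Hsin)) as [z Hz].
  assert (Hn0 : 0 < INR n) by (apply lt_0_INR; unfold n; lia).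
  pose proof PI_RGT_0.
  assert (Z1 : 0 < IZR z * PI) by (rewrite <- Hz; apply Rmult_lt_0_compat; lra).
  assert (Z2 : IZR z * PI < INR n * PI) by (rewrite <- Hz; apply Rmult_lt_compat_l; lra).
  assert (Z3 : 0 < IZR z) by nra.
  assert (Z4 : IZR z < INR n) by nra.
  apply lt_0_IZR in Z3. rewrite INR_IZR_INZ in Z4. apply lt_IZR in Z4.
  exists (Z.to_nat z). split; [lia|].
  rewrite INR_IZR_INZ, Z2Nat.id by lia. rewrite <- Hz, <- Hc. f_equal. field. lra.
Qed.

(** Half-trace of the transfer matrix over one cell; it drives the node recurrence. *)
Definition half_trace (n : nat) (sigma lam : R) : R :=
  Cfun lam (/ INR n) + sigma * Sfun lam (/ INR n) / 2.

(** The dispersion function, i.e. the half-trace written in terms of [g = sqrt lam]. *)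
Definition disp (n : nat) (sigma g : R) : R := cos (g / INR n) + sigma * sin (g / INR n) / (2 * g).

Lemma half_trace_pos n sigma lam : 0 < lam ->
  half_trace n sigma lam = disp n sigma (sqrt lam).
Proof.
  intros Hl. assert (0 < sqrt lam) by (apply sqrt_lt_R0, Hl).
  unfold half_trace, disp, Cfun, Sfun. destruct (Rlt_dec 0 lam); [|lra].
  unfold Rdiv. rewrite !(Rmult_comm (sqrt lam)). field. lra.
Qed.

Lemma eigenfunction_node_values n sigma lam u : (2 <= n)%nat -> is_eigenfunction n sigma lam u ->
  forall k, (k <= n)%nat -> u (xk n k) = u (xk n 1) * cheb_U (half_trace n sigma lam) k.
Proof.
  intros Hn Hu. apply (recurrence_cheb_U (fun k => u (xk n k))).
  - rewrite xk_0. apply Hu.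
  - intros k Hk. cbv beta. rewrite (node_recurrence n sigma lam u Hn Hu k Hk).
    unfold half_trace. field.
Qed.

Lemma eigenvalue_classification n sigma mu : (2 <= n)%nat -> 0 <= sigma ->
  is_eigenvalue n sigma mu ->
  0 < mu /\ (INR n * PI <= sqrt mu \/
             exists i, (1 <= i <= n - 1)%nat /\ disp n sigma (sqrt mu) = cos (INR i * PI / INR n)).
Proof.
  intros Hn Hsig [w Hw].
  destruct (first_cell_slope n sigma mu w Hn Hw) as [B [HB Hw1]].
  set (c := Cfun mu (/ INR n)) in *. set (s := Sfun mu (/ INR n)) in *.
  assert (Hn0 : 0 < INR n) by (apply lt_0_INR; lia).
  assert (Hh : 0 < / INR n) by (apply Rinv_0_lt_compat; lra).
  assert (Hend : B * s * cheb_U (half_trace n sigma mu) n = 0).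
  { rewrite <- Hw1, <- (eigenfunction_node_values n sigma mu w Hn Hw n (le_n n)),
      xk_n by lia. apply Hw. }
  destruct (Rle_dec mu 0) as [Hmu|Hmu].
  { exfalso. destruct (fundamental_nonpos mu (/ INR n) Hmu Hh) as [C1 S1].
    fold c s in C1, S1.
    assert (HT : 1 <= half_trace n sigma mu) by (unfold half_trace; fold c s; nra).
    destruct n as [|n']; [lia|]. pose proof (cheb_U_ge1 _ HT n').
    assert (B * s <> 0) by (apply Rmult_integral_contrapositive; split; lra).
    apply Rmult_integral in Hend. destruct Hend; lra. }
  split; [lra|].
  set (g := sqrt mu).
  assert (Hg : 0 < g) by (apply sqrt_lt_R0; lra).
  destruct (Rle_dec (INR n * PI) g) as [Hbig|Hsmall]; [left; exact Hbig|right].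
  assert (Hgn : 0 < g / INR n < PI).
  { split; [apply Rdiv_lt_0_compat; lra|].
    apply (Rmult_lt_reg_r (INR n)); auto. unfold Rdiv. rewrite Rmult_assoc, Rinv_l; lra. }
  assert (Hs : 0 < s).
  { unfold s, Sfun. destruct (Rlt_dec 0 mu); [|lra]. fold g.
    replace (g * / INR n) with (g / INR n) by reflexivity.
    apply Rdiv_lt_0_compat; [apply sin_gt_0|]; lra. }
  assert (HU : cheb_U (half_trace n sigma mu) n = 0).
  { apply Rmult_integral in Hend. destruct Hend as [E|E]; [|exact E].
    apply Rmult_integral in E. destruct E; lra. }
  destruct (cheb_U_root _ n ltac:(lia) HU) as [i [Hi Ti]].
  exists i. split; [exact Hi|]. rewrite <- Ti. symmetry. apply half_trace_pos. lra.
Qed.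

Lemma cos_strict_decreasing x y : 0 <= x -> x < y -> y <= PI -> cos y < cos x.
Proof. intros. apply cos_decreasing_1; lra. Qed.

Lemma grid_angle_bounds n i : (1 <= i <= n - 1)%nat -> 0 < INR i * PI / INR n < PI.
Proof.
  intros Hi. assert (Hn0 : 0 < INR n) by (apply lt_0_INR; lia). pose proof PI_RGT_0.
  assert (1 <= INR i) by (apply (le_INR 1); lia).
  assert (INR i < INR n) by (apply lt_INR; lia).
  split; [apply Rdiv_lt_0_compat; nra|].
  apply (Rmult_lt_reg_r (INR n)); auto. unfold Rdiv. rewrite Rmult_assoc, Rinv_l; nra.
Qed.

Lemma cos_grid_decreasing n i j : (1 <= n)%nat -> (i < j)%nat -> (j <= n)%nat ->
  cos (INR j * PI / INR n) < cos (INR i * PI / INR n).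
Proof.
  intros Hn Hij Hj. assert (Hn0 : 0 < INR n) by (apply lt_0_INR; lia). pose proof PI_RGT_0.
  assert (INR i < INR j) by (apply lt_INR; auto).
  assert (INR j <= INR n) by (apply le_INR; auto).
  pose proof (pos_INR i).
  apply cos_strict_decreasing.
  - apply Rdiv_le_0_compat; nra.
  - unfold Rdiv. apply Rmult_lt_compat_r; [apply Rinv_0_lt_compat|]; nra.
  - apply (Rmult_le_reg_r (INR n)); auto. unfold Rdiv. rewrite Rmult_assoc, Rinv_l; nra.
Qed.

Lemma tcos_lt_sin t : 0 < t < PI -> t * cos t < sin t.
Proof.
  intros Ht.
  assert (HD : forall y, 0 <= y <= t ->
            derivable_pt_lim (fun y => sin y - y * cos y) y (y * sin y)).
  { intros y Hy. apply is_derive_Reals. auto_derive; auto. ring. }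
  destruct (MVT_cor2 _ _ 0 t ltac:(lra) HD) as [z [Hz1 Hz2]].
  rewrite sin_0, cos_0 in Hz1.
  assert (0 < sin z) by (apply sin_gt_0; lra).
  assert (0 < z * sin z * (t - 0)) by (apply Rmult_lt_0_compat; [apply Rmult_lt_0_compat|]; lra).
  lra.
Qed.

(** [t |-> cos t + a sin t / t] is strictly decreasing on [(0, pi]] for [a >= 0]:
    both [cos] and [sin t / t] decrease there. *)
Lemma cos_plus_sinc_decreasing a t1 t2 : 0 <= a -> 0 < t1 -> t1 < t2 -> t2 <= PI ->
  cos t2 + a * sin t2 / t2 < cos t1 + a * sin t1 / t1.
Proof.
  intros Ha H1 H12 H2.
  assert (HD : forall y, t1 <= y <= t2 -> derivable_pt_lim (fun t => cos t + a * sin t / t) y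
     (- sin y + a * ((y * cos y - sin y) / (y * y)))).
  { intros y Hy. apply is_derive_Reals. auto_derive; [lra | field; lra]. }
  destruct (MVT_cor2 _ _ t1 t2 H12 HD) as [z [Hz1 Hz2]].
  assert (S1 : 0 < sin z) by (apply sin_gt_0; lra).
  assert (S2 : z * cos z < sin z) by (apply tcos_lt_sin; lra).
  assert (S3 : (z * cos z - sin z) / (z * z) < 0)
    by (apply Rdiv_neg_pos; [lra | apply Rmult_lt_0_compat; lra]).
  assert (- sin z + a * ((z * cos z - sin z) / (z * z)) < 0) by nra.
  assert ((- sin z + a * ((z * cos z - sin z) / (z * z))) * (t2 - t1) < 0)
    by (apply Rmult_neg_pos; lra).
  lra.
Qed.

Lemma disp_decreasing n sigma g1 g2 : (1 <= n)%nat -> 0 <= sigma -> 0 < g1 -> g1 < g2 ->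
  g2 <= INR n * PI -> disp n sigma g2 < disp n sigma g1.
Proof.
  intros Hn Hs H1 H12 H2. assert (Hn0 : 0 < INR n) by (apply lt_0_INR; lia).
  assert (Hscale : forall g, 0 < g -> disp n sigma g =
            cos (g / INR n) + sigma / (2 * INR n) * sin (g / INR n) / (g / INR n))
    by (intros g Hg; unfold disp; field; lra).
  rewrite !Hscale by lra.
  apply cos_plus_sinc_decreasing.
  - apply Rdiv_le_0_compat; lra.
  - apply Rdiv_lt_0_compat; lra.
  - unfold Rdiv; apply Rmult_lt_compat_r; [apply Rinv_0_lt_compat|]; lra.
  - apply (Rmult_le_reg_r (INR n)); auto. unfold Rdiv. rewrite Rmult_assoc, Rinv_l; lra.
Qed.

Lemma disp_order n sigma g1 g2 : (1 <= n)%nat -> 0 <= sigma ->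
  0 < g1 <= INR n * PI -> 0 < g2 <= INR n * PI ->
  disp n sigma g2 < disp n sigma g1 -> g1 < g2.
Proof.
  intros Hn Hs H1 H2 HT. destruct (Rlt_le_dec g1 g2) as [L|[L|L]]; auto.
  - pose proof (disp_decreasing n sigma g2 g1 Hn Hs ltac:(lra) L ltac:(lra)). lra.
  - subst. lra.
Qed.

Lemma disp_injective n sigma g1 g2 : (1 <= n)%nat -> 0 <= sigma ->
  0 < g1 <= INR n * PI -> 0 < g2 <= INR n * PI ->
  disp n sigma g1 = disp n sigma g2 -> g1 = g2.
Proof.
  intros Hn Hs H1 H2 HT. destruct (Rtotal_order g1 g2) as [L|[E|L]]; auto.
  - pose proof (disp_decreasing n sigma g1 g2 Hn Hs ltac:(lra) L ltac:(lra)). lra.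
  - pose proof (disp_decreasing n sigma g2 g1 Hn Hs ltac:(lra) L ltac:(lra)). lra.
Qed.

(** Each dispersion relation [disp g = cos (i pi / n)] has a root in [(0, n pi)]
    (intermediate value theorem between [pi / 2] and [n pi]). *)
Lemma disp_root_exists n sigma i : (2 <= n)%nat -> 0 <= sigma -> (1 <= i <= n - 1)%nat ->
  exists g, 0 < g < INR n * PI /\ disp n sigma g = cos (INR i * PI / INR n).
Proof.
  intros Hn Hs Hi. assert (Hn0 : 0 < INR n) by (apply lt_0_INR; lia).
  assert (Hn2 : 2 <= INR n) by (apply (le_INR 2); lia).
  assert (Ii : 1 <= INR i) by (apply (le_INR 1); lia).
  pose proof PI_RGT_0. pose proof (grid_angle_bounds n i Hi) as Hth.
  set (f := fun g => cos (INR i * PI / INR n) - disp n sigma g).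
  assert (Hhalf : 0 < PI / 2 / INR n < INR i * PI / INR n).
  { split; [apply Rdiv_lt_0_compat; lra|].
    unfold Rdiv. apply Rmult_lt_compat_r; [apply Rinv_0_lt_compat|]; nra. }
  assert (F1 : f (PI / 2) < 0).
  { unfold f, disp.
    assert (0 <= sigma * sin (PI / 2 / INR n) / (2 * (PI / 2))).
    { apply Rdiv_le_0_compat; [apply Rmult_le_pos; [lra | left; apply sin_gt_0]|]; lra. }
    pose proof (cos_strict_decreasing (PI / 2 / INR n) (INR i * PI / INR n)). lra. }
  assert (F2 : 0 < f (INR n * PI)).
  { unfold f, disp. replace (INR n * PI / INR n) with PI by (field; lra).
    rewrite sin_PI, Rmult_0_r. unfold Rdiv at 2. rewrite Rmult_0_l, Rplus_0_r.
    pose proof (cos_strict_decreasing (INR i * PI / INR n) PI). lra. }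
  assert (Hc : forall g, PI / 2 <= g <= INR n * PI -> continuity_pt f g).
  { intros g Hg. apply continuity_pt_filterlim, (@ex_derive_continuous R_AbsRing R_NormedModule).
    unfold f, disp. auto_derive. lra. }
  destruct (Ranalysis5.IVT_interv f (PI / 2) (INR n * PI) Hc ltac:(nra) F1 F2) as [z [Hz1 Hz2]].
  exists z. split.
  - split; [lra|]. destruct (Req_dec z (INR n * PI)) as [E|E]; [subst z; lra | lra].
  - unfold f in Hz2. lra.
Qed.

(** Harmonic functions [A sin (g x) + B cos (g x)]: the family is closed under
    differentiation, so its members are smooth with [y'' = - g^2 y]. *)
Definition harmonic (A B g x : R) : R := A * sin (g * x) + B * cos (g * x).

Lemma harmonic_derive A B g x : is_derive (harmonic A B g) x (harmonic (- B * g) (A * g) g x).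
Proof. unfold harmonic. auto_derive; auto. ring. Qed.

Lemma harmonic_Derive A B g x : Derive (harmonic A B g) x = harmonic (- B * g) (A * g) g x.
Proof. apply is_derive_unique, harmonic_derive. Qed.

Lemma harmonic_smooth A B g p x : ex_derive_n (harmonic A B g) p x.
Proof.
  revert p x.
  assert (G : forall p, exists A' B', forall x,
            Derive_n (harmonic A B g) p x = harmonic A' B' g x /\
            ex_derive_n (harmonic A B g) p x).
  { induction p as [|p [A' [B' IH]]]; [exists A, B; intros y; simpl; auto|].
    exists (- B' * g), (A' * g). intros y. simpl. split.
    - rewrite (Derive_ext _ (harmonic A' B' g)) by (intro z; apply IH). apply harmonic_Derive.
    - apply (ex_derive_ext (harmonic A' B' g)); [intro z; symmetry; apply IH|].
      eexists. apply harmonic_derive. }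
  intros p x. destruct (G p) as [A' [B' H]]. apply H.
Qed.

Lemma harmonic_Derive_2 A B g x : Derive_n (harmonic A B g) 2 x = - g ^ 2 * harmonic A B g x.
Proof.
  simpl. rewrite (Derive_ext _ (harmonic (- B * g) (A * g) g)) by (intro y; apply harmonic_Derive).
  rewrite harmonic_Derive. unfold harmonic. ring.
Qed.

(** Construction of an eigenfunction from a root of a dispersion relation: if
    [0 < g < n pi], [0 < t < pi], [sin (n t) = 0] and [disp g = cos t], then gluing on
    each cell the solution of [y'' = - g^2 y] interpolating the node values
    [sin (j t)] gives an eigenfunction for [g^2]. *)
Section Construction.
Variables (n : nat) (sigma g t : R).
Hypothesis Hn : (2 <= n)%nat.
Hypothesis Hg : 0 < g < INR n * PI.
Hypothesis Ht : 0 < t < PI.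
Hypothesis Hend : sin (INR n * t) = 0.
Hypothesis Hdisp : disp n sigma g = cos t.

Let Hn0 : 0 < INR n.
Proof. apply lt_0_INR; lia. Qed.

Let Hstep : 0 < / INR n.
Proof. apply Rinv_0_lt_compat, Hn0. Qed.

Definition node (j : Z) : R := IZR j / INR n.
Definition node_val (j : Z) : R := sin (IZR j * t).
Definition sin_step : R := sin (g / INR n).

Definition cell_fun (j : Z) (x : R) : R :=
  (node_val j * sin (g * (node (j + 1) - x)) + node_val (j + 1) * sin (g * (x - node j)))
  / sin_step.
Definition cell_fun' (j : Z) (x : R) : R :=
  g * (- node_val j * cos (g * (node (j + 1) - x)) + node_val (j + 1) * cos (g * (x - node j)))
  / sin_step.
Definition glued (x : R) : R := cell_fun (Int_part (INR n * x)) x.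

Lemma sin_step_pos : 0 < sin_step.
Proof.
  unfold sin_step. apply sin_gt_0; [apply Rdiv_lt_0_compat; lra|].
  apply (Rmult_lt_reg_r (INR n)); auto. unfold Rdiv. rewrite Rmult_assoc, Rinv_l; lra.
Qed.

Lemma node_succ j : node (j + 1) = node j + / INR n.
Proof. unfold node. rewrite plus_IZR. field. lra. Qed.

Lemma xk_node k : xk n k = node (Z.of_nat k).
Proof. unfold xk, node. rewrite <- INR_IZR_INZ. reflexivity. Qed.

Lemma glued_on_cell j x : node j <= x < node (j + 1) -> glued x = cell_fun j x.
Proof.
  intros [H1 H2]. rewrite node_succ in H2. unfold node in H1, H2. unfold glued.
  replace (Int_part (INR n * x)) with j; [reflexivity|].
  apply Int_part_spec. split.
  - apply (Rmult_lt_compat_l (INR n)) in H2; auto.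
    replace (INR n * (IZR j / INR n + / INR n)) with (IZR j + 1) in H2 by (field; lra). lra.
  - apply (Rmult_le_compat_l (INR n)) in H1; [|lra].
    replace (INR n * (IZR j / INR n)) with (IZR j) in H1 by (field; lra). lra.
Qed.

Lemma glued_near j x : node j < x < node (j + 1) -> locally x (fun y => cell_fun j y = glued y).
Proof.
  intros Hx. apply (locally_open (fun y => node j < y < node (j + 1))); [| |exact Hx].
  - apply open_and; [apply open_gt | apply open_lt].
  - intros y Hy. symmetry. apply glued_on_cell. lra.
Qed.

Lemma cell_fun_left j : cell_fun j (node j) = node_val j.
Proof.
  pose proof sin_step_pos. unfold cell_fun. rewrite node_succ.
  replace (g * (node j + / INR n - node j)) with (g / INR n) by (field; lra).
  rewrite Rminus_diag, Rmult_0_r, sin_0. fold sin_step. field. lra.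
Qed.

Lemma cell_fun_right j : cell_fun j (node (j + 1)) = node_val (j + 1).
Proof.
  pose proof sin_step_pos. unfold cell_fun. rewrite node_succ.
  replace (g * (node j + / INR n - node j)) with (g / INR n) by (field; lra).
  rewrite Rminus_diag, Rmult_0_r, sin_0. fold sin_step. field. lra.
Qed.

Lemma glued_node j : glued (node j) = node_val j.
Proof. rewrite (glued_on_cell j); [apply cell_fun_left | rewrite node_succ; lra]. Qed.

Lemma cell_fun_harmonic j x : cell_fun j x =
  harmonic ((- node_val j * cos (g * node (j + 1)) + node_val (j + 1) * cos (g * node j)) / sin_step)
           ((node_val j * sin (g * node (j + 1)) - node_val (j + 1) * sin (g * node j)) / sin_step)
           g x.
Proof.
  pose proof sin_step_pos. unfold cell_fun, harmonic.
  replace (g * (node (j + 1) - x)) with (g * node (j + 1) - g * x) by ring.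
  replace (g * (x - node j)) with (g * x - g * node j) by ring.
  rewrite !sin_minus. field. lra.
Qed.

Lemma cell_fun_derive j x : is_derive (cell_fun j) x (cell_fun' j x).
Proof.
  pose proof sin_step_pos. unfold cell_fun, cell_fun'. auto_derive; auto.
  unfold Rminus. field. lra.
Qed.

Lemma cell_fun_continuous j x : continuous (cell_fun j) x.
Proof.
  apply (@ex_derive_continuous R_AbsRing R_NormedModule). eexists. apply cell_fun_derive.
Qed.

Lemma cell_fun'_continuous j x : continuous (cell_fun' j) x.
Proof.
  apply (@ex_derive_continuous R_AbsRing R_NormedModule). pose proof sin_step_pos.
  unfold cell_fun'. auto_derive. lra.
Qed.

(** Continuity at a node [node j] combines the cells [j - 1] and [j], whose
    solutions both take the value [node_val j] there. *)
Lemma glued_continuous x : continuous glued x.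
Proof.
  set (j := Int_part (INR n * x)).
  destruct (base_Int_part (INR n * x)) as [B1 B2]. fold j in B1, B2.
  assert (Hx1 : node j <= x).
  { unfold node. apply (Rmult_le_reg_l (INR n)); auto.
    replace (INR n * (IZR j / INR n)) with (IZR j) by (field; lra). lra. }
  assert (Hx2 : x < node (j + 1)).
  { rewrite node_succ. unfold node. apply (Rmult_lt_reg_l (INR n)); auto.
    replace (INR n * (IZR j / INR n + / INR n)) with (IZR j + 1) by (field; lra). lra. }
  destruct Hx1 as [Hlt|Heq].
  { apply (continuous_ext_loc glued (cell_fun j) x);
      [apply glued_near; lra | apply cell_fun_continuous]. }
  clearbody j. subst x. apply filterlim_locally. intros eps.
  assert (Hprev : node (j - 1) = node j - / INR n)
    by (pose proof (node_succ (j - 1)) as E; replace (j - 1 + 1)%Z with j in E by ring; lra).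
  pose proof (proj1 (filterlim_locally _ _) (cell_fun_continuous j (node j)) eps) as Lr.
  pose proof (proj1 (filterlim_locally _ _) (cell_fun_continuous (j - 1) (node j)) eps) as Ll.
  assert (Lnear : locally (node j) (fun y => node (j - 1) <= y < node (j + 1))).
  { apply (locally_open (fun y => node (j - 1) < y < node (j + 1))).
    - apply open_and; [apply open_gt | apply open_lt].
    - intros y Hy. lra.
    - lra. }
  eapply filter_imp; [| exact (filter_and _ _ Lr (filter_and _ _ Ll Lnear))].
  intros y [H1 [H2 [H3 H4]]]. rewrite glued_node.
  destruct (Rle_lt_dec (node j) y) as [Hy|Hy].
  - rewrite (glued_on_cell j y) by lra. rewrite cell_fun_left in H1. exact H1.
  - pose proof (cell_fun_right (j - 1)) as E. replace (j - 1 + 1)%Z with j in E by ring.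
    rewrite (glued_on_cell (j - 1) y) by (replace (j - 1 + 1)%Z with j by ring; lra).
    rewrite E in H2. exact H2.
Qed.

(** The jump of the derivative at a node equals [sigma] times the node value:
    this is where the dispersion relation [disp g = cos t] enters. *)
Lemma cell_fun'_jump j :
  cell_fun' j (node j) - cell_fun' (j - 1) (node j) = sigma * node_val j.
Proof.
  pose proof sin_step_pos as Hs.
  assert (Hj : (j - 1 + 1 = j)%Z) by ring.
  unfold cell_fun'. rewrite Hj, node_succ.
  pose proof (node_succ (j - 1)) as E. rewrite Hj in E.
  replace (g * (node j + / INR n - node j)) with (g / INR n) by (field; lra).
  replace (g * (node j - node (j - 1))) with (g / INR n) by (rewrite E; field; lra).
  rewrite !Rminus_diag, !Rmult_0_r, cos_0.
  assert (Hrec : node_val (j + 1) + node_val (j - 1) = 2 * cos t * node_val j).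
  { unfold node_val. rewrite plus_IZR, minus_IZR.
    replace ((IZR j + 1) * t) with (IZR j * t + t) by ring.
    replace ((IZR j - 1) * t) with (IZR j * t - t) by ring.
    rewrite sin_plus, sin_minus. ring. }
  rewrite <- Hdisp in Hrec. unfold disp in Hrec. fold sin_step in Hrec |- *.
  assert (Hrec' : node_val (j + 1) + node_val (j - 1) - 2 * cos (g / INR n) * node_val j
                  = sigma * sin_step / g * node_val j) by (rewrite Hrec; field; lra).
  transitivity (g / sin_step *
    (node_val (j + 1) + node_val (j - 1) - 2 * cos (g / INR n) * node_val j)); [field; lra|].
  rewrite Hrec'. field. lra.
Qed.

Lemma glued_smooth_on_cells k : (1 <= k <= n)%nat -> forall x, in_open_cell n k x ->
  (forall p : nat, ex_derive_n glued p x) /\ - Derive_n glued 2 x = g ^ 2 * glued x.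
Proof.
  intros Hk x Hx. unfold in_open_cell in Hx. rewrite !xk_node in Hx.
  set (j := (Z.of_nat k - 1)%Z).
  replace (Z.of_nat (k - 1)) with j in Hx by (unfold j; lia).
  replace (Z.of_nat k) with (j + 1)%Z in Hx by (unfold j; lia).
  assert (L : locally x (fun y => harmonic
      ((- node_val j * cos (g * node (j + 1)) + node_val (j + 1) * cos (g * node j)) / sin_step)
      ((node_val j * sin (g * node (j + 1)) - node_val (j + 1) * sin (g * node j)) / sin_step)
      g y = glued y)).
  { eapply filter_imp; [| exact (glued_near j x Hx)].
    intros y Hy. rewrite <- Hy. symmetry. apply cell_fun_harmonic. }
  split.
  - intros p. apply (ex_derive_n_ext_loc _ _ p x L), harmonic_smooth.
  - rewrite <- (Derive_n_ext_loc _ _ 2 x L), harmonic_Derive_2.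
    apply locally_singleton in L. rewrite L. ring.
Qed.

Lemma glued_jump k : (1 <= k <= n - 1)%nat ->
  exists dplus dminus : R,
    filterlim (Derive glued) (at_right (xk n k)) (locally dplus) /\
    filterlim (Derive glued) (at_left (xk n k)) (locally dminus) /\
    dplus - dminus = sigma * glued (xk n k).
Proof.
  intros Hk. set (j := Z.of_nat k).
  exists (cell_fun' j (node j)), (cell_fun' (j - 1) (node j)).
  assert (Hj : (j - 1 + 1 = j)%Z) by ring.
  rewrite xk_node. fold j. split; [|split].
  - apply (filterlim_at_right_of_eq _ _ (node j) (node (j + 1)));
      [rewrite node_succ; lra | | apply cell_fun'_continuous].
    intros y Hy. rewrite <- (Derive_ext_loc _ _ y (glued_near j y Hy)).
    apply is_derive_unique, cell_fun_derive.
  - apply (filterlim_at_left_of_eq _ _ (node (j - 1)) (node j));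
      [pose proof (node_succ (j - 1)) as E; rewrite Hj in E; lra | | apply cell_fun'_continuous].
    intros y Hy.
    rewrite <- (Derive_ext_loc _ _ y (glued_near (j - 1) y ltac:(rewrite Hj; exact Hy))).
    apply is_derive_unique, cell_fun_derive.
  - rewrite cell_fun'_jump, glued_node. reflexivity.
Qed.

Lemma glued_is_eigenfunction : is_eigenfunction n sigma (g ^ 2) glued.
Proof.
  split; [|split; [|split; [|split; [|split]]]].
  - intros x _. eapply filterlim_filter_le_1; [apply filter_le_within | apply glued_continuous].
  - exists (xk n 1). split; [apply xk_bounds; lia|].
    rewrite xk_node, glued_node. unfold node_val. simpl. rewrite Rmult_1_l.
    apply Rgt_not_eq, sin_gt_0; lra.
  - exact glued_smooth_on_cells.
  - transitivity (glued (node 0)); [f_equal; unfold node; simpl; unfold Rdiv; ring|].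
    rewrite glued_node. unfold node_val. rewrite Rmult_0_l. apply sin_0.
  - rewrite <- (xk_n n), xk_node, glued_node by lia. unfold node_val.
    rewrite <- INR_IZR_INZ. exact Hend.
  - exact glued_jump.
Qed.

End Construction.

(** The root of the [i]-th dispersion relation in [(0, n pi)]; it is unique since
    [disp] is injective there. *)
Definition disp_root (n : nat) (sigma : R) (i : nat) : R :=
  epsilon (inhabits 0)
    (fun g => 0 < g < INR n * PI /\ disp n sigma g = cos (INR i * PI / INR n)).

Lemma NoDup_map_increasing (f : nat -> R) a len :
  (forall i j, (a <= i)%nat -> (i < j)%nat -> (j < a + len)%nat -> f i < f j) ->
  NoDup (map f (seq a len)).
Proof.
  revert a. induction len as [|len IH]; intros a Hf; simpl; constructor.
  - intro Hin. apply in_map_iff in Hin. destruct Hin as [j [Ej Hj]].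
    apply in_seq in Hj. pose proof (Hf a j ltac:(lia) ltac:(lia) ltac:(lia)). lra.
  - apply IH. intros i j H1 H2 H3. apply Hf; lia.
Qed.

(** Counting the eigenvalues: the eigenvalues in [(0, (n pi)^2)] are exactly the
    squares of the [n - 1] dispersion roots, which increase with [i]. *)
Section Counting.
Variables (n : nat) (sigma : R).
Hypothesis Hn : (2 <= n)%nat.
Hypothesis Hsig : 0 <= sigma.

Let root := disp_root n sigma.

Lemma disp_root_spec i : (1 <= i <= n - 1)%nat ->
  0 < root i < INR n * PI /\ disp n sigma (root i) = cos (INR i * PI / INR n).
Proof. intros Hi. unfold root, disp_root. apply epsilon_spec, disp_root_exists; auto. Qed.

Lemma disp_root_eigenvalue i : (1 <= i <= n - 1)%nat -> is_eigenvalue n sigma (root i ^ 2).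
Proof.
  intros Hi. destruct (disp_root_spec i Hi) as [Hg Hd].
  exists (glued n (root i) (INR i * PI / INR n)).
  apply glued_is_eigenfunction; auto; [apply grid_angle_bounds, Hi|].
  apply sin_eq_0_1. exists (Z.of_nat i). rewrite <- INR_IZR_INZ.
  assert (0 < INR n) by (apply lt_0_INR; lia). field. lra.
Qed.

Lemma disp_root_increasing i j : (1 <= i)%nat -> (i < j)%nat -> (j <= n - 1)%nat ->
  root i < root j.
Proof.
  intros. destruct (disp_root_spec i ltac:(lia)) as [Hi Ei].
  destruct (disp_root_spec j ltac:(lia)) as [Hj Ej].
  apply (disp_order n sigma); try lia; try lra.
  rewrite Ei, Ej. apply cos_grid_decreasing; lia.
Qed.

Lemma NoDup_disp_roots len : (len <= n - 1)%nat ->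
  NoDup (map (fun i => root i ^ 2) (seq 1 len)).
Proof.
  intros Hlen. apply NoDup_map_increasing. intros i j Hi Hij Hj.
  pose proof (disp_root_increasing i j Hi Hij ltac:(lia)).
  destruct (disp_root_spec i ltac:(lia)). nra.
Qed.

Lemma roots_below_count lam (l : list R) len : (len <= n - 1)%nat ->
  (forall mu, In mu l <-> is_eigenvalue n sigma mu /\ mu < lam) ->
  (forall i, (1 <= i <= len)%nat -> root i ^ 2 < lam) -> (len <= length l)%nat.
Proof.
  intros Hlen Hl Hbelow.
  assert (Hincl : incl (map (fun i => root i ^ 2) (seq 1 len)) l).
  { intros mu Hmu. apply in_map_iff in Hmu. destruct Hmu as [i [<- Hi]]. apply in_seq in Hi.
    apply Hl. split; [apply disp_root_eigenvalue; lia | apply Hbelow; lia]. }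
  pose proof (NoDup_incl_length (NoDup_disp_roots len Hlen) Hincl) as L.
  rewrite length_map, length_seq in L. exact L.
Qed.

Lemma eigenvalue_below_root i mu : (1 <= i <= n - 1)%nat ->
  is_eigenvalue n sigma mu -> mu < root i ^ 2 ->
  exists j, (1 <= j < i)%nat /\ mu = root j ^ 2.
Proof.
  intros Hi Hmu Hlt. destruct (disp_root_spec i Hi) as [Hri Hdi].
  destruct (eigenvalue_classification n sigma mu Hn Hsig Hmu) as [Hpos [Hbig|[j [Hj Hdj]]]].
  { assert (sqrt mu < root i) by (rewrite <- (sqrt_pow2 (root i)) by lra; apply sqrt_lt_1; lra).
    lra. }
  assert (Hsq : 0 < sqrt mu < root i).
  { split; [apply sqrt_lt_R0, Hpos|].
    rewrite <- (sqrt_pow2 (root i)) by lra. apply sqrt_lt_1; lra. }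
  destruct (disp_root_spec j Hj) as [Hrj Hdrj].
  assert (Ej : root j = sqrt mu) by (apply (disp_injective n sigma); try lia; lra).
  exists j. split.
  - split; [lia|]. destruct (lt_dec j i) as [L|L]; [exact L|].
    destruct (Nat.eq_dec j i) as [->|Hne]; [lra|].
    pose proof (disp_root_increasing i j ltac:(lia) ltac:(lia) ltac:(lia)). lra.
  - rewrite Ej, pow2_sqrt; lra.
Qed.

Lemma mth_eigenvalue_dispersion m lam : (1 <= m <= n - 1)%nat ->
  is_mth_eigenvalue n sigma m lam ->
  0 < lam /\ disp n sigma (sqrt lam) = cos (INR m * PI / INR n).
Proof.
  intros Hm [Hev [l [Hnd [Hlen Hl]]]].
  destruct (eigenvalue_classification n sigma lam Hn Hsig Hev) as [Hpos Hcases].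
  split; [exact Hpos|].
  assert (Hsmall : sqrt lam < INR n * PI).
  { destruct (Rlt_le_dec (sqrt lam) (INR n * PI)) as [L|L]; [exact L|exfalso].
    assert (Hcount : (n - 1 <= length l)%nat).
    { apply (roots_below_count lam l); auto. intros i Hi.
      destruct (disp_root_spec i ltac:(lia)) as [Hr _].
      rewrite <- (pow2_sqrt lam) by lra. pose proof (sqrt_pos lam). nra. }
    lia. }
  destruct Hcases as [Hbig|[i [Hi Hdi]]]; [lra|].
  destruct (disp_root_spec i Hi) as [Hri Hdri].
  assert (Hroot : root i = sqrt lam)
    by (apply (disp_injective n sigma); try lia; try lra; pose proof (sqrt_lt_R0 lam Hpos); lra).
  assert (Hlam : lam = root i ^ 2) by (rewrite Hroot, pow2_sqrt; lra).
  assert (Hlower : (i - 1 <= length l)%nat).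
  { apply (roots_below_count lam l); auto; [lia|]. intros j Hj.
    rewrite Hlam. pose proof (disp_root_increasing j i ltac:(lia) ltac:(lia) ltac:(lia)).
    destruct (disp_root_spec j ltac:(lia)). nra. }
  assert (Hupper : (length l <= i - 1)%nat).
  { assert (Hincl : incl l (map (fun j => root j ^ 2) (seq 1 (i - 1)))).
    { intros mu Hmu. apply Hl in Hmu. destruct Hmu as [Hmu Hlt]. rewrite Hlam in Hlt.
      destruct (eigenvalue_below_root i mu Hi Hmu Hlt) as [j [Hj ->]].
      apply in_map_iff. exists j. split; [reflexivity | apply in_seq; lia]. }
    pose proof (NoDup_incl_length Hnd Hincl) as L. rewrite length_map, length_seq in L. exact L. }
  replace m with i by lia. exact Hdi.
Qed.

End Counting.

Theorem corollary1p2 (n m : nat) (sigma lam : R) (u : R -> R) :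
  (2 <= n)%nat -> (1 <= m <= n - 1)%nat -> 0 <= sigma ->
  is_mth_eigenvalue n sigma m lam ->
  is_eigenfunction n sigma lam u ->
  (forall x, 0 <= x <= xk n 1 -> u x = sin (sqrt lam * x)) ->
  forall k : nat, (1 <= k <= n - 1)%nat ->
    u (xk n k) =
      sin (sqrt lam / INR n) / sin (INR m * PI / INR n) *
      sin (INR k * INR m * PI / INR n)
    /\
    u (xk n k) =
      sin (sqrt lam / INR n) / sin (INR m * PI / INR n) *
      sin (INR m * PI * xk n k).
Proof.
  intros Hn Hm Hsig Hmth Hu Hnorm k Hk.
  assert (Hn0 : 0 < INR n) by (apply lt_0_INR; lia).
  destruct (mth_eigenvalue_dispersion n sigma Hn Hsig m lam Hm Hmth) as [Hlam Hdisp].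
  set (th := INR m * PI / INR n) in *.
  assert (Hsin : 0 < sin th)
    by (pose proof (grid_angle_bounds n m Hm) as B; fold th in B; apply sin_gt_0; lra).
  (* node values are [u(x_1) U_(k-1)(cos th)], and [u(x_1) = sin (sqrt lam / n)] *)
  assert (Hnode : u (xk n k) = sin (sqrt lam / INR n) * (sin (INR k * th) / sin th)).
  { rewrite (eigenfunction_node_values n sigma lam u Hn Hu k ltac:(lia)).
    rewrite half_trace_pos, Hdisp by exact Hlam.
    rewrite Hnorm by (pose proof (xk_bounds n 1 ltac:(lia) ltac:(lia)); lra).
    replace (sqrt lam * xk n 1) with (sqrt lam / INR n) by (unfold xk; simpl; field; lra).
    rewrite <- (cheb_U_cos th k). field. lra. }
  rewrite Hnode. split.
  - replace (INR k * INR m * PI / INR n) with (INR k * th) by (unfold th; field; lra). field. lra.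
  - replace (INR m * PI * xk n k) with (INR k * th) by (unfold th, xk; field; lra). field. lra.
Qed.
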